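(* Let $G_2=BS(1,2)=\langle a,b\mid bab^{-1}=a^2\rangle$ and let $\Gamma_2$ be its Cayley graph with respect to $\{a,b\}$. If $\sigma$ is a geodesic in $\Gamma_2$, then $\sigma$ does not contain three distinct $b$-edges $e_1,e_2,e_3$ with $h(e_1)=h(e_2)=h(e_3)$.
   Context: $\Gamma_2$ has vertex set $G_2$ and edges $\{g,gs\}$ for $s\in\{a^{\pm1},b^{\pm1}\}$; an edge $\{g,gb\}$ is a $b$-edge and $\{g,ga\}$ an $a$-edge. The height $h(\omega)\in\mathbb{Z}$ of $\omega\in G_2$ is the integer with $\omega=a^kb^{h(\omega)}$ in the abelianization of $G_2$ for some $k$ (i.e., the exponent sum of $b$ in any word representing $\omega$). For a $b$-edge $e=\{v,w\}$, $h(e)=\max\{h(v),h(w)\}$. *)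

(* BS(1,2) = <a,b | b a b^-1 = a^2> given by its presentation:
   group elements are words over {a, a^-1, b, b^-1} modulo the smallest
   congruence containing free cancellation and the defining relator. *)
From Stdlib Require Import List ZArith Lia.
Import ListNotations.

Inductive letter : Type := A | Ai | B | Bi.

Definition linv (x : letter) : letter :=
  match x with A => Ai | Ai => A | B => Bi | Bi => B end.

Definition word := list letter.

Inductive weq : word -> word -> Prop :=
| weq_refl u : weq u u
| weq_sym u v : weq u v -> weq v u
| weq_trans u v w : weq u v -> weq v w -> weq u w
| weq_cong u u' v v' : weq u u' -> weq v v' -> weq (u ++ v) (u' ++ v')
| weq_free x : weq [x; linv x] []
| weq_rel : weq [B; A; Bi] [A; A].

Fixpoint bsum (w : word) : Z :=
  match w with
  | [] => 0%Z
  | B :: t => (1 + bsum t)%Z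
  | Bi :: t => (-1 + bsum t)%Z
  | _ :: t => bsum t
  end.

Definition height (w : word) : Z := bsum w.

(* An edge path in Gamma_2 starting at the vertex (represented by) g and
   following the letters of w.  Its i-th vertex is g w_1 ... w_i. *)
Definition pvert (g w : word) (i : nat) : word := g ++ firstn i w.

Definition geodesic (g w : word) : Prop :=
  forall u : word, weq (g ++ u) (g ++ w) -> length w <= length u.

Definition is_bedge (w : word) (i : nat) : Prop :=
  i < length w /\ (nth i w A = B \/ nth i w A = Bi).

Definition edge_height (g w : word) (i : nat) : Z :=
  Z.max (height (pvert g w i)) (height (pvert g w (S i))).

Definition same_edge (g w : word) (i j : nat) : Prop :=
  (weq (pvert g w i) (pvert g w j) /\ weq (pvert g w (S i)) (pvert g w (S j))) \/
  (weq (pvert g w i) (pvert g w (S j)) /\ weq (pvert g w (S i)) (pvert g w j)).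

(* The elements of height 0 commute: every word equals b^-n u b^l with u a word in
   a^{+-1}, height 0 forces l = n, and conjugating by b doubles the letters of u, so two
   height-0 elements can be brought to a common level n, where b^-n u b^n b^-n v b^n =
   b^-n (u v) b^n and words in a^{+-1} commute.  Hence for a b-letter x and height-0 words
   u1, u2, x u1 x^-1 u2 x = u2 x u1 is shorter by two letters, and a geodesic never
   contains this pattern.  Three distinct b-edges at the same height t are steps where the
   height of the path crosses between t - 1 and t; two consecutive crossings in the same
   direction enclose one in the opposite direction, so some three crossings alternate in
   direction, and the path between them has exactly the forbidden shape. *)

From Stdlib Require Import List ZArith Lia Setoid Morphisms.
Import ListNotations.

#[local] Instance weq_equivalence : Equivalence weq.
Proof. split; [exact weq_refl | exact weq_sym | exact weq_trans]. Qed.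

#[local] Instance app_weq_proper : Proper (weq ==> weq ==> weq) (@app letter).
Proof. intros u u' Hu v v' Hv. exact (weq_cong u u' v v' Hu Hv). Qed.

#[local] Instance cons_weq_proper x : Proper (weq ==> weq) (cons x).
Proof. intros u v H. exact (weq_cong [x] [x] u v (weq_refl _) H). Qed.

Lemma weq_BBi : weq [B; Bi] []. Proof. exact (weq_free B). Qed.
Lemma weq_BiB : weq [Bi; B] []. Proof. exact (weq_free Bi). Qed.
Lemma weq_AAi : weq [A; Ai] []. Proof. exact (weq_free A). Qed.
Lemma weq_AiA : weq [Ai; A] []. Proof. exact (weq_free Ai). Qed.

Definition a_letter (x : letter) : Prop := x = A \/ x = Ai.
Definition a_word (u : word) : Prop := Forall a_letter u.

Fixpoint dbl (u : word) : word :=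
  match u with [] => [] | x :: t => x :: x :: dbl t end.

Lemma a_word_dbl u : a_word u -> a_word (dbl u).
Proof. induction 1; simpl; [constructor | now repeat apply Forall_cons]. Qed.

Lemma a_word_iter_dbl n u : a_word u -> a_word (Nat.iter n dbl u).
Proof. apply Nat.iter_invariant, a_word_dbl. Qed.

Lemma weq_BA : weq [B; A] [A; A; B].
Proof.
  transitivity ([B; A; Bi] ++ [B]); [|now rewrite weq_rel].
  change ([B; A; Bi] ++ [B]) with ([B; A] ++ [Bi; B]).
  now rewrite weq_BiB, app_nil_r.
Qed.

Lemma weq_BAi : weq [B; Ai] [Ai; Ai; B].
Proof.
  (* B Ai = Ai Ai (A A B) Ai = Ai Ai (B A) Ai = Ai Ai B *)
  transitivity ([Ai] ++ [Ai; A] ++ [A] ++ [B; Ai]).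
  { rewrite weq_AiA. simpl. change [Ai; A; B; Ai] with ([Ai; A] ++ [B; Ai]).
    now rewrite weq_AiA. }
  change ([Ai] ++ [Ai; A] ++ [A] ++ [B; Ai]) with ([Ai; Ai] ++ [A; A; B] ++ [Ai]).
  rewrite <- weq_BA. change ([Ai; Ai] ++ [B; A] ++ [Ai]) with ([Ai; Ai; B] ++ [A; Ai]).
  now rewrite weq_AAi, app_nil_r.
Qed.

Lemma weq_B_a_word u : a_word u -> weq (B :: u) (dbl u ++ [B]).
Proof.
  induction 1 as [|x u Hx _ IH]; [reflexivity|].
  change (B :: x :: u) with ([B; x] ++ u).
  destruct Hx as [-> | ->]; [rewrite weq_BA | rewrite weq_BAi]; simpl; now rewrite IH.
Qed.

Lemma weq_a_word_Bi u : a_word u -> weq (u ++ [Bi]) (Bi :: dbl u).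
Proof.
  intros Hu. transitivity ([Bi; B] ++ u ++ [Bi]); [now rewrite weq_BiB|].
  change ([Bi; B] ++ u ++ [Bi]) with (Bi :: (B :: u) ++ [Bi]).
  rewrite (weq_B_a_word u Hu), <- app_assoc. simpl.
  now rewrite weq_BBi, app_nil_r.
Qed.

Lemma weq_a_word_Bis n u : a_word u ->
  weq (u ++ repeat Bi n) (repeat Bi n ++ Nat.iter n dbl u).
Proof.
  revert u; induction n as [|n IH]; intros u Hu; simpl.
  - now rewrite app_nil_r.
  - change (u ++ Bi :: repeat Bi n) with (u ++ [Bi] ++ repeat Bi n).
    rewrite app_assoc, (weq_a_word_Bi u Hu). simpl.
    now rewrite (IH _ (a_word_dbl u Hu)), <- Nat.iter_succ_r.
Qed.

Lemma a_letter_comm x y : a_letter x -> a_letter y -> weq [x; y] [y; x].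
Proof.
  intros [-> | ->] [-> | ->]; try reflexivity; now rewrite weq_AAi, weq_AiA.
Qed.

Lemma a_word_comm u v : a_word u -> a_word v -> weq (u ++ v) (v ++ u).
Proof.
  intros Hu Hv. induction Hu as [|x u Hx _ IH]; simpl; [now rewrite app_nil_r|].
  rewrite IH. change (x :: v ++ u) with ((x :: v) ++ u).
  change (v ++ x :: u) with (v ++ [x] ++ u). rewrite app_assoc.
  apply app_weq_proper; [|reflexivity]. clear IH.
  induction Hv as [|y v Hy _ IHv]; [reflexivity|].
  change (x :: y :: v) with ([x; y] ++ v). rewrite (a_letter_comm x y Hx Hy). simpl.
  now rewrite IHv.
Qed.

Definition nform (n : nat) (u : word) (l : nat) : word :=
  repeat Bi n ++ u ++ repeat B l.

Lemma weq_nform w : exists n u l, a_word u /\ weq w (nform n u l).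
Proof.
  induction w as [|x w (n & u & l & Hu & Hw)].
  - exists 0, [], 0. split; [constructor | reflexivity].
  - enough (exists n' u' l', a_word u' /\ weq (x :: nform n u l) (nform n' u' l'))
      as (n' & u' & l' & Hu' & E) by (exists n', u', l'; split; [|rewrite Hw]; assumption).
    unfold nform.
    assert (Ha : forall y, a_letter y -> exists n' u' l', a_word u' /\
              weq (y :: repeat Bi n ++ u ++ repeat B l) (nform n' u' l')).
    { intros y Hy. exists n, (Nat.iter n dbl [y] ++ u), l. split.
      - apply Forall_app; split; [apply a_word_iter_dbl; now constructor | assumption].
      - change (y :: repeat Bi n ++ u ++ repeat B l)
          with (([y] ++ repeat Bi n) ++ u ++ repeat B l).
        rewrite weq_a_word_Bis by now constructor.
        unfold nform. now rewrite <- !app_assoc. }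
    destruct x.
    + apply Ha. now left.
    + apply Ha. now right.
    + destruct n as [|n]; simpl.
      * exists 0, (dbl u), (S l). split; [now apply a_word_dbl|].
        change (B :: u ++ repeat B l) with ((B :: u) ++ repeat B l).
        rewrite (weq_B_a_word u Hu). unfold nform. now rewrite <- app_assoc.
      * exists n, u, l. split; [assumption|].
        change (B :: Bi :: ?r) with ([B; Bi] ++ r). now rewrite weq_BBi.
    + now exists (S n), u, l.
Qed.

Lemma bsum_app u v : bsum (u ++ v) = (bsum u + bsum v)%Z.
Proof. induction u as [|[] u IH]; cbn [bsum app]; lia. Qed.

Lemma bsum_weq u v : weq u v -> bsum u = bsum v.
Proof. induction 1; rewrite ?bsum_app; try destruct x; cbn [bsum linv]; lia. Qed.

Lemma bsum_a_word u : a_word u -> bsum u = 0%Z.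
Proof. induction 1 as [|x u [-> | ->] _ IH]; [reflexivity | exact IH | exact IH]. Qed.

Lemma bsum_repeat x k : bsum (repeat x k) = (Z.of_nat k * bsum [x])%Z.
Proof.
  induction k as [|k IH]; [reflexivity|].
  change (repeat x (S k)) with ([x] ++ repeat x k). rewrite bsum_app, IH. lia.
Qed.

Lemma bsum_nform n u l : a_word u -> bsum (nform n u l) = (Z.of_nat l - Z.of_nat n)%Z.
Proof.
  intros Hu. unfold nform. rewrite !bsum_app, !bsum_repeat, (bsum_a_word u Hu).
  cbn [bsum]. lia.
Qed.

Lemma nform_lift n u : a_word u -> weq (nform n u n) (nform (S n) (dbl u) (S n)).
Proof.
  intros Hu. unfold nform.
  transitivity (repeat Bi n ++ [Bi; B] ++ u ++ repeat B n); [now rewrite weq_BiB|].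
  change ([Bi; B] ++ u ++ repeat B n) with ([Bi] ++ (B :: u) ++ repeat B n).
  rewrite (weq_B_a_word u Hu).
  simpl repeat. rewrite repeat_cons, <- !app_assoc. reflexivity.
Qed.

Lemma nform_lift_iter d n u : a_word u ->
  weq (nform n u n) (nform (d + n) (Nat.iter d dbl u) (d + n)).
Proof.
  intros Hu. induction d as [|d IH]; [reflexivity|].
  rewrite IH. apply nform_lift, a_word_iter_dbl, Hu.
Qed.

Lemma weq_Bs_Bis n : weq (repeat B n ++ repeat Bi n) [].
Proof.
  induction n as [|n IH]; [reflexivity|].
  change (repeat B (S n)) with (B :: repeat B n).
  rewrite repeat_cons, <- app_assoc.
  change ([B] ++ repeat Bi (S n)) with ([B; Bi] ++ repeat Bi n).
  now rewrite weq_BBi.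
Qed.

Lemma nform_mul n u v : weq (nform n u n ++ nform n v n) (nform n (u ++ v) n).
Proof.
  unfold nform.
  transitivity (repeat Bi n ++ u ++ (repeat B n ++ repeat Bi n) ++ v ++ repeat B n);
    [now rewrite <- !app_assoc | now rewrite weq_Bs_Bis, app_nil_l, <- !app_assoc].
Qed.

Lemma weq_comm_bsum0 x y : bsum x = 0%Z -> bsum y = 0%Z -> weq (x ++ y) (y ++ x).
Proof.
  intros Hx Hy.
  destruct (weq_nform x) as (n & u & l & Hu & Ex).
  destruct (weq_nform y) as (p & v & q & Hv & Ey).
  rewrite (bsum_weq _ _ Ex), bsum_nform in Hx by exact Hu.
  rewrite (bsum_weq _ _ Ey), bsum_nform in Hy by exact Hv.
  assert (l = n) as -> by lia. assert (q = p) as -> by lia.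
  rewrite Ex, Ey, (nform_lift_iter p n u Hu), (nform_lift_iter n p v Hv).
  replace (n + p) with (p + n) by lia.
  rewrite !nform_mul. unfold nform.
  rewrite (a_word_comm (Nat.iter p dbl u)) by auto using a_word_iter_dbl.
  reflexivity.
Qed.

Lemma linv_involutive x : linv (linv x) = x.
Proof. now destruct x. Qed.

Lemma weq_shortcut x u1 u2 : bsum u1 = 0%Z -> bsum u2 = 0%Z ->
  weq ([x] ++ u1 ++ [linv x] ++ u2 ++ [x]) (u2 ++ [x] ++ u1).
Proof.
  intros H1 H2.
  assert (H0 : bsum ([x] ++ u1 ++ [linv x]) = 0%Z)
    by (rewrite !bsum_app, H1; destruct x; cbn [bsum linv]; lia).
  transitivity ((([x] ++ u1 ++ [linv x]) ++ u2) ++ [x]); [now rewrite <- !app_assoc|].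
  rewrite (weq_comm_bsum0 _ _ H0 H2).
  transitivity (u2 ++ [x] ++ u1 ++ [linv x; linv (linv x)]);
    [rewrite linv_involutive; now rewrite <- !app_assoc|].
  now rewrite weq_free, app_nil_r.
Qed.

Lemma discrete_ivt (f : nat -> Z) c a b : a <= b ->
  (forall n, a <= n < b -> (f n - 1 <= f (S n))%Z) ->
  (c < f a)%Z -> (f b <= c)%Z ->
  exists m, a <= m < b /\ f m = (c + 1)%Z /\ f (S m) = c.
Proof.
  intros Hab Hstep Ha Hb. induction b as [|b IH].
  - assert (a = 0) as -> by lia. lia.
  - assert (a <> S b) by (intros ->; lia).
    destruct (Z_le_gt_dec (f b) c) as [Hle | Hgt].
    + destruct IH as (m & Hm & E); [lia | intros n Hn; apply Hstep; lia | assumption |].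
      exists m. split; [lia | exact E].
    + exists b. pose proof (Hstep b ltac:(lia)). lia.
Qed.

Lemma firstn_S_nth (w : word) n : n < length w ->
  firstn (S n) w = firstn n w ++ [nth n w A].
Proof.
  revert n; induction w as [|x w IH]; intros n H; simpl in H; [lia|].
  destruct n as [|n]; [reflexivity|].
  change (firstn (S (S n)) (x :: w)) with (x :: firstn (S n) w). rewrite IH by lia. reflexivity.
Qed.

Lemma firstn_app_skipn_firstn (w : word) a b : a <= b ->
  firstn b w = firstn a w ++ skipn a (firstn b w).
Proof.
  intros H. rewrite <- (firstn_skipn a (firstn b w)) at 1.
  now rewrite firstn_firstn, Nat.min_l.
Qed.

Lemma geodesic_infix_minimal g w p X Y s : geodesic g w -> w = p ++ X ++ s -> weq X Y ->
  length X <= length Y.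
Proof.
  intros G -> E.
  enough (length (p ++ X ++ s) <= length (p ++ Y ++ s)) by (rewrite !length_app in *; lia).
  apply G. now rewrite E.
Qed.

Definition prefix_height (w : word) (n : nat) : Z := bsum (firstn n w).

Definition b_letter (x : letter) : Prop := x = B \/ x = Bi.

Section Path.
Variables (g w : word).
Local Notation P := (prefix_height w).

Lemma prefix_height_S n : n < length w -> P (S n) = (P n + bsum [nth n w A])%Z.
Proof. intros H. unfold prefix_height. now rewrite firstn_S_nth, bsum_app. Qed.

Definition bedge_at (x : letter) (n : nat) (t : Z) : Prop :=
  n < length w /\ nth n w A = x /\ b_letter x /\ Z.max (P n) (P (S n)) = t.

Lemma bedge_at_B n t : bedge_at B n t -> P n = (t - 1)%Z /\ P (S n) = t.
Proof.
  intros (Hn & E & _ & Ht). rewrite prefix_height_S, E in * by exact Hn.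
  cbn [bsum] in *. lia.
Qed.

Lemma bedge_at_Bi n t : bedge_at Bi n t -> P n = t /\ P (S n) = (t - 1)%Z.
Proof.
  intros (Hn & E & _ & Ht). rewrite prefix_height_S, E in * by exact Hn.
  cbn [bsum] in *. lia.
Qed.

Lemma bedge_at_up n t : n < length w -> P n = (t - 1)%Z -> P (S n) = t -> bedge_at B n t.
Proof.
  intros Hn H1 H2. pose proof (prefix_height_S n Hn) as E.
  repeat split; [exact Hn | | now left | lia].
  destruct (nth n w A); cbn [bsum] in E; [lia | lia | reflexivity | lia].
Qed.

Lemma bedge_at_down n t : n < length w -> P n = t -> P (S n) = (t - 1)%Z -> bedge_at Bi n t.
Proof.
  intros Hn H1 H2. pose proof (prefix_height_S n Hn) as E.
  repeat split; [exact Hn | | now right | lia].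
  destruct (nth n w A); cbn [bsum] in E; [lia | lia | lia | reflexivity].
Qed.

Lemma bedge_at_between x i j t : i < j -> bedge_at x i t -> bedge_at x j t ->
  exists m, i < m < j /\ bedge_at (linv x) m t.
Proof.
  intros Hij Hi Hj.
  assert (Hw : j < length w) by apply Hj.
  assert (Hstep : forall n, n < length w -> (-1 <= P (S n) - P n <= 1)%Z)
    by (intros n Hn; rewrite prefix_height_S by exact Hn; destruct (nth n w A); cbn [bsum]; lia).
  assert (Hx : b_letter x) by apply Hi.
  destruct Hx as [-> | ->].
  - apply bedge_at_B in Hi, Hj.
    destruct (discrete_ivt P (t - 1) (S i) j) as (m & Hm & E1 & E2);
      [lia | intros n Hn; specialize (Hstep n ltac:(lia)); lia | lia | lia |].
    exists m. split; [lia|]. apply bedge_at_down; lia.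
  - apply bedge_at_Bi in Hi, Hj.
    destruct (discrete_ivt (fun n => - P n)%Z (- t) (S i) j) as (m & Hm & E1 & E2);
      [lia | intros n Hn; specialize (Hstep n ltac:(lia)); lia | lia | lia |].
    exists m. split; [lia|]. apply bedge_at_up; lia.
Qed.

Hypothesis geo : geodesic g w.

Lemma geodesic_no_shortcut x i j k : i < j < k -> k < length w ->
  nth i w A = x -> nth j w A = linv x -> nth k w A = x ->
  P j = P (S i) -> P k = P (S j) -> False.
Proof.
  intros Hijk Hk Ei Ej Ek Hj Hk'.
  set (u1 := skipn (S i) (firstn j w)). set (u2 := skipn (S j) (firstn k w)).
  assert (F1 : firstn j w = firstn (S i) w ++ u1) by (apply firstn_app_skipn_firstn; lia).
  assert (F2 : firstn k w = firstn (S j) w ++ u2) by (apply firstn_app_skipn_firstn; lia).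
  assert (B1 : bsum u1 = 0%Z) by (unfold prefix_height in Hj; rewrite F1, bsum_app in Hj; lia).
  assert (B2 : bsum u2 = 0%Z) by (unfold prefix_height in Hk'; rewrite F2, bsum_app in Hk'; lia).
  assert (Ew : w = firstn i w ++ ([x] ++ u1 ++ [linv x] ++ u2 ++ [x]) ++ skipn (S k) w).
  { rewrite <- (firstn_skipn (S k) w) at 1.
    rewrite firstn_S_nth, F2, firstn_S_nth, F1, firstn_S_nth, Ei, Ej, Ek by lia.
    now rewrite <- !app_assoc. }
  pose proof (geodesic_infix_minimal g w _ _ _ _ geo Ew (weq_shortcut x u1 u2 B1 B2)) as L.
  rewrite !length_app in L. cbn [length] in L. lia.
Qed.

Lemma bedges_at_alternating x i j k t : i < j < k ->
  bedge_at x i t -> bedge_at (linv x) j t -> bedge_at x k t -> False.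
Proof.
  intros Hijk Hi Hj Hk.
  pose proof Hi as (_ & Ei & Hx & _). pose proof Hj as (_ & Ej & _).
  pose proof Hk as (Hkw & Ek & _).
  apply (geodesic_no_shortcut x i j k); [lia | exact Hkw | exact Ei | exact Ej | exact Ek | |].
  all: destruct Hx as [-> | ->];
    [apply bedge_at_B in Hi, Hk; apply bedge_at_Bi in Hj
    |apply bedge_at_Bi in Hi, Hk; apply bedge_at_B in Hj]; lia.
Qed.

Lemma no_three_bedges_at x y z i j k t : i < j < k ->
  bedge_at x i t -> bedge_at y j t -> bedge_at z k t -> False.
Proof.
  intros Hijk Hi Hj Hk.
  assert (letter_dec : forall a b : letter, {a = b} + {a <> b}) by decide equality.
  destruct (letter_dec y x) as [-> | Hyx]; [|destruct (letter_dec z y) as [-> | Hzy]].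
  - destruct (bedge_at_between x i j t) as (m & Hm & Hm'); [lia | exact Hi | exact Hj |].
    exact (bedges_at_alternating x i m j t ltac:(lia) Hi Hm' Hj).
  - destruct (bedge_at_between y j k t) as (m & Hm & Hm'); [lia | exact Hj | exact Hk |].
    exact (bedges_at_alternating y j m k t ltac:(lia) Hj Hm' Hk).
  - assert (y = linv x /\ z = x) as [-> ->].
    { pose proof Hi as (_ & _ & [-> | ->] & _); pose proof Hj as (_ & _ & [-> | ->] & _);
        pose proof Hk as (_ & _ & [-> | ->] & _); cbn [linv]; intuition congruence. }
    exact (bedges_at_alternating x i j k t Hijk Hi Hj Hk).
Qed.

End Path.

Lemma edge_height_prefix g w n :
  edge_height g w n = (bsum g + Z.max (prefix_height w n) (prefix_height w (S n)))%Z.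
Proof. unfold edge_height, height, pvert, prefix_height. rewrite !bsum_app. lia. Qed.

Lemma same_edge_refl g w n : same_edge g w n n.
Proof. left. split; reflexivity. Qed.

Theorem lemma1 (g w : word) :
  geodesic g w ->
  ~ (exists i j k : nat,
       is_bedge w i /\ is_bedge w j /\ is_bedge w k /\
       ~ same_edge g w i j /\ ~ same_edge g w i k /\ ~ same_edge g w j k /\
       edge_height g w i = edge_height g w j /\
       edge_height g w j = edge_height g w k).
Proof.
  intros geo (i & j & k & Hi & Hj & Hk & Nij & Nik & Njk & Eij & Ejk).
  assert (Hat : forall n, is_bedge w n ->
            bedge_at w (nth n w A) n (edge_height g w n - bsum g)%Z).
  { intros n [Hn Hb]. repeat split; [exact Hn | exact Hb |]. rewrite edge_height_prefix. lia. }
  apply Hat in Hi, Hj, Hk. rewrite Eij, Ejk in Hi. rewrite Ejk in Hj.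
  assert (i <> j /\ i <> k /\ j <> k) as (Dij & Dik & Djk)
    by (repeat split; intros ->; eauto using same_edge_refl).
  assert (i < j < k \/ i < k < j \/ j < i < k \/ j < k < i \/ k < i < j \/ k < j < i)
    as Hord by lia.
  destruct Hord as [H | [H | [H | [H | [H | H]]]]]; eapply no_three_bedges_at; eauto.
Qed.
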